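(* Let $(H,B_1,B_2)$ be a Rota-Baxter system of Hopf algebras, $G(H)$ the group of group-like elements of $H$ and $P(H)$ the Lie algebra of primitive elements of $H$. Then $B_1,B_2$ map $G(H)$ into $G(H)$ and $P(H)$ into $P(H)$, $(G(H),B_1|_{G(H)},S\circ B_2|_{G(H)})$ is a Rota-Baxter system of groups, and $(P(H),B_1|_{P(H)},-B_2|_{P(H)})$ is a Rota-Baxter system of Lie algebras.
   Context: $\mathbb{F}$ is a field of characteristic $0$; Sweedler notation $\Delta(a)=a_1\otimes a_2$. A Rota-Baxter system of Hopf algebras is a triple $(H,B_1,B_2)$ where $(H,\cdot,1,\Delta,\epsilon,S)$ is a cocommutative Hopf algebra and $B_1,B_2:H\to H$ are coalgebra homomorphisms with $B_1(1)=B_2(1)=1$ such that for all $a,b\in H$: $B_1(a)B_1(b)=B_1(B_1(a_1)bS(B_2(a_2)))$ and $B_2(a)B_2(b)=B_2(B_1(a_1)bS(B_2(a_2)))$. A Rota-Baxter system of groups is a group $G$ with maps $R_1,R_2:G\to G$ such that $R_1(a)R_1(b)=R_1(R_1(a)bR_2(a))$ and $R_2(b)R_2(a)=R_2(R_1(a)bR_2(a))$ for all $a,b\in G$. A Rota-Baxter system of Lie algebras is a Lie algebra $\mathfrak{g}$ with linear maps $R_1,R_2$ such that $[R_1(a),R_1(b)]=R_1([R_1(a),R_1(b)]-[R_2(a),R_2(b)])$ and $[R_2(b),R_2(a)]=R_2([R_1(a),R_1(b)]-[R_2(a),R_2(b)])$ for all $a,b\in\mathfrak{g}$. The bracket on $P(H)$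 is the commutator $[a,b]=ab-ba$. *)

(* A cocommutative Hopf algebra over a field F, with the
   coproduct given in Sweedler form as a finite list of simple tensors. *)
From HB Require Import structures.
From mathcomp Require Import all_boot all_order all_algebra.
Set Implicit Arguments. Unset Strict Implicit. Unset Printing Implicit Defensive.
Import Order.TTheory GRing.Theory.
Local Open Scope ring_scope.

Section Hopf.
Variables (F : fieldType) (H : algType F).

Definition lin (V : lmodType F) (g : H -> V) : Prop :=
  forall (k : F) (x y : H), g (k *: x + y) = k *: g x + g y.

Definition bilin (V : lmodType F) (f : H -> H -> V) : Prop :=
  (forall a, lin (f a)) /\ (forall b, lin (fun a => f a b)).

Definition trilin (V : lmodType F) (t : H -> H -> H -> V) : Prop :=
  (forall a b, lin (t a b)) /\ (forall a c, lin (fun b => t a b c)) /\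
  (forall b c, lin (fun a => t a b c)).

(* the value on  sum_i x_i (x) y_i  of the linear map H (x) H -> V induced by f *)
Definition tsum (V : lmodType F) (f : H -> H -> V) (s : seq (H * H)) : V :=
  \sum_(p <- s) f p.1 p.2.

(* equality of two elements of H (x) H, via the universal property of (x) *)
Definition teq (s t : seq (H * H)) : Prop :=
  forall (V : lmodType F) (f : H -> H -> V), bilin f -> tsum f s = tsum f t.

Record cocomm_hopf (cop : H -> seq (H * H)) (eps : H -> F) (S : H -> H) : Prop := {
  cop_lin : forall (V : lmodType F) (f : H -> H -> V), bilin f ->
              lin (fun a => tsum f (cop a));
  coassoc : forall (V : lmodType F) (t : H -> H -> H -> V), trilin t ->
    forall a, \sum_(p <- cop a) \sum_(q <- cop p.1) t q.1 q.2 p.2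
            = \sum_(p <- cop a) \sum_(q <- cop p.2) t p.1 q.1 q.2;
  eps_lin : forall (k : F) (x y : H), eps (k *: x + y) = k * eps x + eps y;
  counit_l : forall a, \sum_(p <- cop a) eps p.1 *: p.2 = a;
  counit_r : forall a, \sum_(p <- cop a) eps p.2 *: p.1 = a;
  cop1 : teq (cop 1) [:: (1, 1)];
  copM : forall a b, teq (cop (a * b))
           [seq (p.1 * q.1, p.2 * q.2) | p <- cop a, q <- cop b];
  eps1 : eps 1 = 1;
  epsM : forall a b, eps (a * b) = eps a * eps b;
  S_lin : lin S;
  antipode_l : forall a, \sum_(p <- cop a) S p.1 * p.2 = (eps a)%:A;
  antipode_r : forall a, \sum_(p <- cop a) p.1 * S p.2 = (eps a)%:A;
  cocomm : forall a, teq (cop a) [seq (p.2, p.1) | p <- cop a]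
}.

Definition coalg_hom (cop : H -> seq (H * H)) (eps : H -> F) (B : H -> H) : Prop :=
  [/\ lin B,
      forall a, teq (cop (B a)) [seq (B p.1, B p.2) | p <- cop a]
    & forall a, eps (B a) = eps a].

Definition rb_hopf_sys (cop : H -> seq (H * H)) (eps : H -> F) (S B1 B2 : H -> H)
  : Prop :=
  [/\ cocomm_hopf cop eps S, coalg_hom cop eps B1, coalg_hom cop eps B2,
      B1 1 = 1 /\ B2 1 = 1 &
      forall a b,
        B1 a * B1 b = B1 (\sum_(p <- cop a) B1 p.1 * b * S (B2 p.2)) /\
        B2 a * B2 b = B2 (\sum_(p <- cop a) B1 p.1 * b * S (B2 p.2))].

Definition grouplike (cop : H -> seq (H * H)) (g : H) : Prop :=
  g != 0 /\ teq (cop g) [:: (g, g)].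

Definition primitive (cop : H -> seq (H * H)) (x : H) : Prop :=
  teq (cop x) [:: (x, 1); (1, x)].

(* Rota-Baxter system of groups on the subgroup G of the units of H
   (group law = multiplication of H) *)
Definition rb_group_sys (G : H -> Prop) (R1 R2 : H -> H) : Prop :=
  forall a b, G a -> G b ->
    R1 a * R1 b = R1 (R1 a * b * R2 a) /\ R2 b * R2 a = R2 (R1 a * b * R2 a).

Definition lie_comm (a b : H) : H := a * b - b * a.

Definition rb_lie_sys (P : H -> Prop) (R1 R2 : H -> H) : Prop :=
  forall a b, P a -> P b ->
    lie_comm (R1 a) (R1 b)
      = R1 (lie_comm (R1 a) (R1 b) - lie_comm (R2 a) (R2 b)) /\
    lie_comm (R2 b) (R2 a)
      = R2 (lie_comm (R1 a) (R1 b) - lie_comm (R2 a) (R2 b)).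

End Hopf.

From HB Require Import structures.
From mathcomp Require Import all_boot all_order all_algebra ssrAC.
Set Implicit Arguments. Unset Strict Implicit. Unset Printing Implicit Defensive.
Import GRing.Theory.
Local Open Scope ring_scope.

(* Group-like and primitive elements are recognised by the shape of their
   coproduct, which coalgebra maps preserve.  For group-like a the Sweedler sum
   in the Rota-Baxter identity collapses to B1 a * b * S (B2 a), and S (B2 g) is
   the inverse of B2 g; this gives the group system.  For primitive a the sum is
   B1 a * b - b * B2 a, so [B_i a, B_i b] = B_i w with w = rb_sum a b - rb_sum b a.
   Taking b = 1 shows B_i (rb_sum w 1) = B_i w, so it remains to see that
   rb_sum w 1 = (B1 - B2) w = [B1 a, B1 b] - [B2 a, B2 b].  The defect
   rb_sum _ 1 - (B1 - B2) is linear, vanishes on primitives and equals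
   -((B1 - B2) u * B2 v + (B1 - B2) v * B2 u) on a product u * v of primitives;
   since B1 and B2 absorb B1 - B2 on primitives, the cross terms coming from w
   cancel. *)

Section Linearity.
Variables (F : fieldType) (H : algType F) (V : lmodType F).
Implicit Types (g h : H -> V) (f : H -> H -> V).

Lemma linB g x y : lin g -> g (x - y) = g x - g y.
Proof. by move=> lin_g; have := lin_g (-1) y x; rewrite !scaleN1r !(addrC (- _)). Qed.

Lemma lin_sub g h : lin g -> lin h -> lin (fun x => g x - h x).
Proof.
move=> lin_g lin_h k x y; rewrite lin_g lin_h scalerBr opprD !addrA.
by rewrite (ACl (1*3*2*4)).
Qed.

Lemma lin_comp g (t : H -> H) : lin g -> lin t -> lin (fun x => g (t x)).
Proof. by move=> lin_g lin_t k x y; rewrite lin_t lin_g. Qed.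

Lemma bilin_comp f (t1 t2 : H -> H) :
  bilin f -> lin t1 -> lin t2 -> bilin (fun x y => f (t1 x) (t2 y)).
Proof.
move=> [f_l f_r] lin1 lin2; split=> a k x y /=; first by rewrite lin2 f_l.
by rewrite lin1 (f_r (t2 a)).
Qed.

End Linearity.

Section Multiplication.
Variables (F : fieldType) (H : algType F).

Lemma lin_id : lin (fun x : H => x). Proof. by []. Qed.

Lemma lin_mull (c : H) : lin (fun x => c * x).
Proof. by move=> k x y; rewrite mulrDr -scalerAr. Qed.

Lemma lin_mulr (c : H) : lin (fun x => x * c).
Proof. by move=> k x y; rewrite mulrDl -scalerAl. Qed.

Lemma bilin_mul : bilin (fun x y : H => x * y).
Proof. by split=> a; [exact: lin_mull | exact: lin_mulr]. Qed.

Lemma lie_commNN (x y : H) : lie_comm (- x) (- y) = lie_comm x y.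
Proof. by rewrite /lie_comm !mulrNN. Qed.

Lemma lie_commC (x y : H) : lie_comm y x = - lie_comm x y.
Proof. by rewrite /lie_comm opprB. Qed.

End Multiplication.

Section Sweedler.
Variables (F : fieldType) (H : algType F) (cop : H -> seq (H * H)).
Variables (V : lmodType F) (f : H -> H -> V).
Hypothesis bilin_f : bilin f.

Lemma tsum_grouplike g : teq (cop g) [:: (g, g)] -> tsum f (cop g) = f g g.
Proof. by move=> cop_g; rewrite (cop_g _ _ bilin_f) /tsum big_seq1. Qed.

Lemma tsum_primitive x : primitive cop x -> tsum f (cop x) = f x 1 + f 1 x.
Proof. by move=> cop_x; rewrite (cop_x _ _ bilin_f) /tsum big_cons big_seq1. Qed.

End Sweedler.

Section HopfAlgebra.
Variables (F : fieldType) (H : algType F) (cop : H -> seq (H * H)) (eps : H -> F).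
Variable S : H -> H.
Hypothesis hopf : cocomm_hopf cop eps S.

Lemma eps0 : eps 0 = 0.
Proof.
have := eps_lin hopf 1 0 0; rewrite scale1r addr0 mul1r.
by move/esym/(canRL (addrK _)); rewrite subrr.
Qed.

Lemma bilin_scale_eps : bilin (fun x y : H => eps x *: y).
Proof.
split=> a k x y /=; first by rewrite scalerDr !scalerA mulrC.
by rewrite (eps_lin hopf) scalerDl scalerA.
Qed.

Lemma bilin_mulS : bilin (fun x y : H => S x * y).
Proof. exact: bilin_comp (bilin_mul H) (S_lin hopf) (@lin_id _ H). Qed.

Lemma bilin_mulSr : bilin (fun x y : H => x * S y).
Proof. exact: bilin_comp (bilin_mul H) (@lin_id _ H) (S_lin hopf). Qed.

Lemma grouplikeP g : teq (cop g) [:: (g, g)] -> eps g = 1 -> grouplike cop g.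
Proof.
move=> cop_g eps_g; split=> //; apply: contra_eqN eps_g => /eqP->.
by rewrite eps0 eq_sym oner_eq0.
Qed.

Lemma eps_grouplike g : grouplike cop g -> eps g = 1.
Proof.
move=> [g_neq0 cop_g].
have : tsum (fun x y => eps x *: y) (cop g) = g := counit_l hopf g.
rewrite (tsum_grouplike bilin_scale_eps cop_g) => /eqP.
rewrite -subr_eq0 -[X in _ - X]scale1r -scalerBl scaler_eq0 (negbTE g_neq0) orbF.
by rewrite subr_eq0 => /eqP.
Qed.

Lemma eps_primitive x : primitive cop x -> eps x = 0.
Proof.
move=> cop_x.
have : tsum (fun x y => eps x *: y) (cop x) = x := counit_l hopf x.
rewrite (tsum_primitive bilin_scale_eps cop_x) (eps1 hopf) scale1r.
move/(canRL (addrK x)); rewrite subrr => /eqP.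
by rewrite scaler_eq0 oner_eq0 orbF => /eqP.
Qed.

Lemma S1 : S 1 = 1.
Proof.
have : tsum (fun x y => S x * y) (cop 1) = (eps 1)%:A := antipode_l hopf 1.
rewrite (cop1 hopf bilin_mulS).
by rewrite /tsum big_seq1 mulr1 (eps1 hopf) scale1r.
Qed.

Lemma S_primitive x : primitive cop x -> S x = - x.
Proof.
move=> cop_x.
have : tsum (fun x y => S x * y) (cop x) = (eps x)%:A := antipode_l hopf x.
rewrite (tsum_primitive bilin_mulS cop_x) eps_primitive // scale0r.
by rewrite S1 mulr1 mul1r => /eqP; rewrite addr_eq0 => /eqP.
Qed.

Lemma mulSg g : grouplike cop g -> S g * g = 1.
Proof.
move=> gl_g; have : tsum (fun x y => S x * y) (cop g) = (eps g)%:A := antipode_l hopf g.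
by rewrite (tsum_grouplike bilin_mulS gl_g.2) eps_grouplike // scale1r.
Qed.

Lemma mulgS g : grouplike cop g -> g * S g = 1.
Proof.
move=> gl_g; have : tsum (fun x y => x * S y) (cop g) = (eps g)%:A := antipode_r hopf g.
by rewrite (tsum_grouplike bilin_mulSr gl_g.2) eps_grouplike // scale1r.
Qed.

Lemma teq_copM a b sa sb : teq (cop a) sa -> teq (cop b) sb ->
  teq (cop (a * b)) [seq (p.1 * q.1, p.2 * q.2) | p <- sa, q <- sb].
Proof.
move=> cop_a cop_b V f bilin_f.
rewrite (copM hopf a b bilin_f) /tsum !big_allpairs_dep /=.
transitivity (\sum_(p <- cop a) \sum_(q <- sb) f (p.1 * q.1) (p.2 * q.2)).
  apply: eq_bigr => p _.
  exact: (cop_b _ _ (bilin_comp bilin_f (lin_mull p.1) (lin_mull p.2))).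
rewrite exchange_big [RHS]exchange_big; apply: eq_bigr => q _.
exact: (cop_a _ _ (bilin_comp bilin_f (lin_mulr q.1) (lin_mulr q.2))).
Qed.

Lemma grouplikeM a b : grouplike cop a -> grouplike cop b -> grouplike cop (a * b).
Proof.
move=> gl_a gl_b; apply: grouplikeP; first exact: teq_copM gl_a.2 gl_b.2.
by rewrite (epsM hopf) !eps_grouplike ?mulr1.
Qed.

Lemma grouplikeS g : grouplike cop g -> grouplike cop (S g).
Proof.
move=> gl_g; apply: grouplikeP; last first.
  have := epsM hopf (S g) g; rewrite mulSg // (eps1 hopf) (eps_grouplike gl_g) mulr1.
  by move->.
move=> V f bilin_f; set u := S g.
have bilin_fu := bilin_comp bilin_f (lin_mulr u) (lin_mulr u).
have := teq_copM (a := u) (fun _ _ _ => erefl) gl_g.2 bilin_fu.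
rewrite mulSg // (cop1 hopf bilin_fu) /tsum big_allpairs_dep !big_seq1 /= mul1r => ->.
by apply: eq_bigr => p _; rewrite big_seq1 /= -!mulrA mulgS // !mulr1.
Qed.

Lemma teq_cop_mul_primitive u v : primitive cop u -> primitive cop v ->
  teq (cop (u * v)) [:: (u * v, 1); (u, v); (v, u); (1, u * v)].
Proof. by move=> cop_u cop_v; have := teq_copM cop_u cop_v; rewrite /= !mulr1 !mul1r. Qed.

Lemma S_cop_primitive_pair w x y : primitive cop x -> primitive cop y ->
  teq (cop w) [:: (w, 1); (x, y); (y, x); (1, w)] -> S w = x * y + y * x - w.
Proof.
move=> cop_x cop_y cop_w.
have eps_w : eps w = 0.
  have : tsum (fun x y => eps x *: y) (cop w) = w := counit_l hopf w.
  rewrite (cop_w _ _ bilin_scale_eps).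
  rewrite /tsum !big_cons big_nil /= (eps_primitive cop_x) (eps_primitive cop_y).
  rewrite (eps1 hopf) !scale0r scale1r.
  by rewrite !add0r addr0 => /(canRL (addrK w)); rewrite subrr => /eqP;
     rewrite scaler_eq0 oner_eq0 orbF => /eqP.
have : tsum (fun x y => S x * y) (cop w) = (eps w)%:A := antipode_l hopf w.
rewrite (cop_w _ _ bilin_mulS) eps_w.
rewrite /tsum !big_cons big_nil /= (S_primitive cop_x) (S_primitive cop_y) S1.
rewrite scale0r mulr1 mul1r !mulNr addr0.
by move/eqP; rewrite addr_eq0 => /eqP->; rewrite !opprD !opprK addrA.
Qed.

Section CoalgebraMorphism.
Variable B : H -> H.
Hypothesis coalg_B : coalg_hom cop eps B.

Lemma teq_coalg_hom a s :
  teq (cop a) s -> teq (cop (B a)) [seq (B p.1, B p.2) | p <- s].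
Proof.
case: coalg_B => lin_B cop_B _ cop_a V f bilin_f.
rewrite (cop_B a _ _ bilin_f) /tsum !big_map.
exact: (cop_a _ _ (bilin_comp bilin_f lin_B lin_B)).
Qed.

Lemma grouplike_coalg_hom g : grouplike cop g -> grouplike cop (B g).
Proof.
move=> gl_g; apply: grouplikeP; first exact: teq_coalg_hom gl_g.2.
by case: coalg_B => _ _ ->; exact: eps_grouplike.
Qed.

Lemma primitive_coalg_hom x : B 1 = 1 -> primitive cop x -> primitive cop (B x).
Proof. by move=> B_1 /teq_coalg_hom; rewrite /= B_1. Qed.

End CoalgebraMorphism.

End HopfAlgebra.

Section RotaBaxterSystem.
Variables (F : fieldType) (H : algType F) (cop : H -> seq (H * H)) (eps : H -> F).
Variables (S B1 B2 : H -> H).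
Hypothesis rb : rb_hopf_sys cop eps S B1 B2.

Let hopf : cocomm_hopf cop eps S. Proof. by case: rb. Qed.
Let coalg_B1 : coalg_hom cop eps B1. Proof. by case: rb. Qed.
Let coalg_B2 : coalg_hom cop eps B2. Proof. by case: rb. Qed.
Let B1_1 : B1 1 = 1. Proof. by case: rb => _ _ _ []. Qed.
Let B2_1 : B2 1 = 1. Proof. by case: rb => _ _ _ []. Qed.
Let lin_B1 : lin B1. Proof. by case: coalg_B1. Qed.
Let lin_B2 : lin B2. Proof. by case: coalg_B2. Qed.

Definition rb_sum a b := tsum (fun x y => B1 x * b * S (B2 y)) (cop a).

Let rb_identity a b :
  B1 a * B1 b = B1 (rb_sum a b) /\ B2 a * B2 b = B2 (rb_sum a b).
Proof. by case: rb => _ _ _ _; apply. Qed.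

Lemma bilin_rb_sum b : bilin (fun x y => B1 x * b * S (B2 y)).
Proof.
exact: bilin_comp (bilin_comp (bilin_mul H) (lin_mulr b) (@lin_id _ H))
  lin_B1 (lin_comp (S_lin hopf) lin_B2).
Qed.

Lemma rb_sum_grouplike a b : grouplike cop a -> rb_sum a b = B1 a * b * S (B2 a).
Proof. by move=> gl_a; rewrite /rb_sum (tsum_grouplike (bilin_rb_sum b) gl_a.2). Qed.

Lemma rb_group_system : rb_group_sys (grouplike cop) B1 (fun g => S (B2 g)).
Proof.
move=> a b gl_a gl_b; have [rb1 rb2] := rb_identity a b.
rewrite rb_sum_grouplike // in rb1 rb2; split=> //.
set c := B1 a * b * S (B2 a) in rb2 *.
have gl_a2 := grouplike_coalg_hom hopf coalg_B2 gl_a.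
have gl_b2 := grouplike_coalg_hom hopf coalg_B2 gl_b.
have gl_c2 := grouplikeM hopf gl_a2 gl_b2; rewrite rb2 in gl_c2.
have inv_c2 : B2 c * (S (B2 b) * S (B2 a)) = 1.
  by rewrite -rb2 mulrA -(mulrA (B2 a)) (mulgS hopf gl_b2) mulr1 (mulgS hopf gl_a2).
by rewrite -[LHS]mul1r -(mulSg hopf gl_c2) -mulrA inv_c2 mulr1.
Qed.

Lemma B_rb_sum1 w : B1 (rb_sum w 1) = B1 w /\ B2 (rb_sum w 1) = B2 w.
Proof. by have [] := rb_identity w 1; rewrite B1_1 B2_1 !mulr1. Qed.

Lemma rb_sum_primitive a b : primitive cop a -> rb_sum a b = B1 a * b - b * B2 a.
Proof.
move=> prim_a; have prim_a2 := primitive_coalg_hom coalg_B2 B2_1 prim_a.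
rewrite /rb_sum (tsum_primitive (bilin_rb_sum b) prim_a) B1_1 B2_1.
by rewrite (S1 hopf) (S_primitive hopf prim_a2) mulr1 mul1r mulrN.
Qed.

Definition Bdiff u := B1 u - B2 u.
Definition cross u v := Bdiff u * B2 v + Bdiff v * B2 u.
Definition defect w := rb_sum w 1 - Bdiff w.

Lemma lin_Bdiff : lin Bdiff. Proof. exact: lin_sub lin_B1 lin_B2. Qed.

Lemma lin_defect : lin defect.
Proof. exact: lin_sub (cop_lin hopf (bilin_rb_sum 1)) lin_Bdiff. Qed.

Lemma B_Bdiff_primitive u :
  primitive cop u -> B1 (Bdiff u) = B1 u /\ B2 (Bdiff u) = B2 u.
Proof.
by move=> prim_u; have := B_rb_sum1 u; rewrite rb_sum_primitive // mulr1 mul1r.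
Qed.

Lemma crossC u v : cross u v = cross v u.
Proof. exact: addrC. Qed.

Lemma crossBl u v w : cross (u - v) w = cross u w - cross v w.
Proof.
rewrite /cross (linB _ _ lin_Bdiff) (linB _ _ lin_B2) mulrBl mulrBr opprD !addrA.
by rewrite (ACl (1*3*2*4)).
Qed.

Lemma cross_Bdiff u v : primitive cop u -> cross (Bdiff u) v = cross u v.
Proof.
move=> prim_u; have [Bdiff1 Bdiff2] := B_Bdiff_primitive prim_u.
by rewrite /cross {1}/Bdiff Bdiff1 Bdiff2.
Qed.

Lemma defect_mul_primitive u v : primitive cop u -> primitive cop v ->
  defect (u * v) = - cross u v.
Proof.
move=> prim_u prim_v; have cop_uv := teq_cop_mul_primitive hopf prim_u prim_v.
have prim_u2 := primitive_coalg_hom coalg_B2 B2_1 prim_u.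
have prim_v2 := primitive_coalg_hom coalg_B2 B2_1 prim_v.
have S_B2uv : S (B2 (u * v)) = B2 u * B2 v + B2 v * B2 u - B2 (u * v).
  apply: (S_cop_primitive_pair hopf prim_u2 prim_v2).
  by have := teq_coalg_hom coalg_B2 cop_uv; rewrite /= B2_1.
rewrite /defect /rb_sum (cop_uv _ _ (bilin_rb_sum 1)) /tsum !big_cons big_nil /=.
rewrite S_B2uv B1_1 B2_1 (S1 hopf) (S_primitive hopf prim_u2) (S_primitive hopf prim_v2).
rewrite /cross /Bdiff !mulr1 !mul1r !mulrN !mulrBl !opprD !opprK !addrA addr0.
by rewrite (ACl ((1*7)*(6*8)*2*4*3*5)) /= subrr addNr !add0r.
Qed.

Lemma defect_rb_sum a b : primitive cop a -> primitive cop b ->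
  defect (rb_sum a b) = - cross a b.
Proof.
move=> prim_a prim_b; have prim_a1 := primitive_coalg_hom coalg_B1 B1_1 prim_a.
have prim_a2 := primitive_coalg_hom coalg_B2 B2_1 prim_a.
rewrite rb_sum_primitive // (linB _ _ lin_defect) !defect_mul_primitive //.
by rewrite opprK (crossC b) addrC -opprB -crossBl -/(Bdiff a) cross_Bdiff.
Qed.

Lemma rb_lie_system : rb_lie_sys (primitive cop) B1 (fun x => - B2 x).
Proof.
move=> a b prim_a prim_b; rewrite !lie_commNN (lie_commC (B2 a)).
have [rb1_ab rb2_ab] := rb_identity a b; have [rb1_ba rb2_ba] := rb_identity b a.
set w := rb_sum a b - rb_sum b a.
have comm1 : lie_comm (B1 a) (B1 b) = B1 w by rewrite /lie_comm rb1_ab rb1_ba linB.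
have comm2 : lie_comm (B2 a) (B2 b) = B2 w by rewrite /lie_comm rb2_ab rb2_ba linB.
have : defect w = 0.
  by rewrite (linB _ _ lin_defect) !defect_rb_sum // (crossC b) subrr.
rewrite /defect /Bdiff -comm1 -comm2 => /eqP; rewrite subr_eq0 => /eqP rb_sum_w.
have [B1_w B2_w] := B_rb_sum1 w.
by rewrite -rb_sum_w B1_w B2_w -comm1 -comm2.
Qed.

End RotaBaxterSystem.

Theorem mainTheorem8 (F : fieldType) (H : algType F)
  (cop : H -> seq (H * H)) (eps : H -> F) (S B1 B2 : H -> H) :
  [pchar F] =i pred0 ->
  rb_hopf_sys cop eps S B1 B2 ->
  [/\ (forall g, grouplike cop g -> grouplike cop (B1 g) /\ grouplike cop (B2 g)),
      (forall x, primitive cop x -> primitive cop (B1 x) /\ primitive cop (B2 x)),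
      (forall g, grouplike cop g -> grouplike cop (S (B2 g))),
      rb_group_sys (grouplike cop) B1 (fun g => S (B2 g))
    & rb_lie_sys (primitive cop) B1 (fun x => - B2 x)].
Proof.
move=> _ rb; have [hopf coalg_B1 coalg_B2 [B1_1 B2_1] _] := rb.
split.
- by move=> g gl_g; split; [exact: (grouplike_coalg_hom hopf coalg_B1 gl_g) |
                            exact: (grouplike_coalg_hom hopf coalg_B2 gl_g)].
- by move=> x prim_x; split; [exact: (primitive_coalg_hom coalg_B1 B1_1 prim_x) |
                              exact: (primitive_coalg_hom coalg_B2 B2_1 prim_x)].
- by move=> g /(grouplike_coalg_hom hopf coalg_B2) /(grouplikeS hopf).
- exact: (rb_group_system rb).
- exact: (rb_lie_system rb).
Qed.
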